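(* Assume the linear payoff assumption and the rank condition $\operatorname{rank}\begin{bmatrix}A(\nu^* )\\ B(\mu^* )\end{bmatrix}=d$. Let $(a^k,b^k)$, $k=1,\dots,N$, be i.i.d. with $a^k\sim\mu^*$ and $b^k\sim\nu^*$ independent. Let $$\widehat\mu(a)=\frac1N\sum_k\mathbf 1\{a^k=a\},\qquad \widehat\nu(b)=\frac1N\sum_k\mathbf 1\{b^k=b\}$$ be the frequency estimators. Let $\widehat\theta$ be the least-squares minimizer of $$\Big\|\begin{bmatrix}A(\widehat\nu)\\ B(\widehat\mu)\end{bmatrix}\theta-\begin{bmatrix}c(\widehat\mu)\\ d(\widehat\nu)\end{bmatrix}\Big\|^2,$$ and set $\widehat Q(a,b)=\langle\phi(a,b),\widehat\theta\rangle$. Then there is a constant $C>0$, depending only on $\phi,\eta,\mu^*,\nu^*$, with the following property. For every $\delta\in(0,1)$ there is $N_0(\delta)$ such that for all $N\ge N_0(\delta)$, with probability at least $1-\delta$, $$\|\widehat Q-Q\|_F^2\le C\,\frac{m^2+n^2+(m+n)\log(1/\delta)}{N}.$$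
   Context: Let $m,n\ge 2$, $\mathcal A=\{1,\dots,m\}$, $\mathcal B=\{1,\dots,n\}$, and $\eta>0$. For a payoff matrix $Q\in\mathbb{R}^{m\times n}$, the entropy-regularized zero-sum matrix game is $$\max_{\mu\in\Delta(\mathcal A)}\min_{\nu\in\Delta(\mathcal B)}\ \mu^\top Q\nu+\eta^{-1}\mathcal H(\mu)-\eta^{-1}\mathcal H(\nu),\qquad \mathcal H(\pi)=-\sum_i\pi_i\log\pi_i .$$ Its unique saddle point, the quantal response equilibrium (QRE) $(\mu,\nu)$, is characterized by $$\mu(a)=\frac{\exp\big(\eta\sum_b Q(a,b)\nu(b)\big)}{\sum_{a'}\exp\big(\eta\sum_bQ(a',b)\nu(b)\big)},\qquad \nu(b)=\frac{\exp\big(-\eta\sum_a Q(a,b)\mu(a)\big)}{\sum_{b'}\exp\big(-\eta\sum_aQ(a,b')\mu(a)\big)}.$$ Linear payoff assumption: there are a feature map $\phi:\mathcal A\times\mathcal B\to\mathbb{R}^d$ and $\theta^*\in\mathbb{R}^d$ with $\|\theta^*\|^2\le M$ such that $Q(a,b)=\langle\phi(a,b),\theta^*\rangle$ for all $(a,b)$. $(\mu^*,\nu^* )$ denotes the QRE of this $Q$; all its entries are positive. For $\mu\in\Delta(\mathcal A)$ and $\nu\in\Delta(\mathcal B)$ with positive entries, define: - $A(\nu)\in\mathbb{R}^{(m-1)\times d}$, whose row indexed by $a=2,\dots,m$ is $\sum_{b}\nu(b)\,(\phi(a,b)-\phi(1,b))^\top$; - $B(\mu)\in\mathbb{R}^{(n-1)\times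 d}$, whose row indexed by $b=2,\dots,n$ is $\sum_a\mu(a)\,(\phi(a,b)-\phi(a,1))^\top$; - $c(\mu)=\big(\eta^{-1}\log(\mu(a)/\mu(1))\big)_{a=2}^m\in\mathbb{R}^{m-1}$; - $d(\nu)=\big(-\eta^{-1}\log(\nu(b)/\nu(1))\big)_{b=2}^n\in\mathbb{R}^{n-1}$. *)

From HB Require Import structures.
From mathcomp Require Import all_boot all_order all_algebra.
From mathcomp Require Import boolp reals.
From mathcomp Require Import sequences exp.
Set Implicit Arguments. Unset Strict Implicit. Unset Printing Implicit Defensive.
Import Order.TTheory GRing.Theory Num.Theory.
Local Open Scope ring_scope.

(* Action sets: A = 'I_p.+1, B = 'I_q.+1, so m = p+1, n = q+1.
   The paper's action "1" is ord0; the rows indexed a = 2..m are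
   lift ord0 i for i : 'I_p. *)

Section Defs.
Variables (R : realType) (p q d : nat).
Variable phi : 'I_p.+1 -> 'I_q.+1 -> 'rV[R]_d.

Definition Qlin (theta : 'cV[R]_d) (a : 'I_p.+1) (b : 'I_q.+1) : R :=
  \sum_(j < d) phi a b 0 j * theta j 0.

Definition Amat (nu : 'I_q.+1 -> R) : 'M[R]_(p, d) :=
  \matrix_(i < p, j < d) \sum_(b < q.+1) nu b * (phi (lift ord0 i) b 0 j - phi ord0 b 0 j).

Definition Bmat (mu : 'I_p.+1 -> R) : 'M[R]_(q, d) :=
  \matrix_(i < q, j < d) \sum_(a < p.+1) mu a * (phi a (lift ord0 i) 0 j - phi a ord0 0 j).

Definition cvec (eta : R) (mu : 'I_p.+1 -> R) : 'cV[R]_p :=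
  \col_(i < p) (eta^-1 * ln (mu (lift ord0 i) / mu ord0)).

Definition dvec (eta : R) (nu : 'I_q.+1 -> R) : 'cV[R]_q :=
  \col_(i < q) (- eta^-1 * ln (nu (lift ord0 i) / nu ord0)).

Definition sqnorm k (v : 'cV[R]_k) : R := \sum_(i < k) v i 0 ^+ 2.

Definition LSobj (eta : R) (mu : 'I_p.+1 -> R) (nu : 'I_q.+1 -> R)
  (theta : 'cV[R]_d) : R :=
  sqnorm (col_mx (Amat nu) (Bmat mu) *m theta - col_mx (cvec eta mu) (dvec eta nu)).

Definition is_LS_minimizer eta mu nu theta : Prop :=
  forall theta', LSobj eta mu nu theta <= LSobj eta mu nu theta'.

Definition frob2 (Q1 Q2 : 'I_p.+1 -> 'I_q.+1 -> R) : R :=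
  \sum_(a < p.+1) \sum_(b < q.+1) (Q1 a b - Q2 a b) ^+ 2.

End Defs.

Definition is_QRE (R : realType) (p q : nat) (eta : R)
  (Q : 'I_p.+1 -> 'I_q.+1 -> R) (mu : 'I_p.+1 -> R) (nu : 'I_q.+1 -> R) : Prop :=
  (forall a, mu a = expR (eta * \sum_b Q a b * nu b) /
                    \sum_a' expR (eta * \sum_b Q a' b * nu b)) /\
  (forall b, nu b = expR (- eta * \sum_a Q a b * mu a) /
                    \sum_b' expR (- eta * \sum_a Q a b' * mu a)).

Definition sample_prob (R : realType) (p q N : nat)
  (mu : 'I_p.+1 -> R) (nu : 'I_q.+1 -> R) (s : {ffun 'I_N -> 'I_p.+1 * 'I_q.+1}) : R :=
  \prod_(k < N) (mu (s k).1 * nu (s k).2).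

Definition Prob (R : realType) (p q N : nat)
  (mu : 'I_p.+1 -> R) (nu : 'I_q.+1 -> R)
  (E : {ffun 'I_N -> 'I_p.+1 * 'I_q.+1} -> Prop) : R :=
  \sum_(s | `[< E s >]) sample_prob mu nu s.

Definition muhat (R : realType) (p q N : nat) (s : {ffun 'I_N -> 'I_p.+1 * 'I_q.+1})
  (a : 'I_p.+1) : R := (#|[set k | (s k).1 == a]|)%:R / N%:R.
Definition nuhat (R : realType) (p q N : nat) (s : {ffun 'I_N -> 'I_p.+1 * 'I_q.+1})
  (b : 'I_q.+1) : R := (#|[set k | (s k).2 == b]|)%:R / N%:R.
Arguments muhat {R p q N} s a.
Arguments nuhat {R p q N} s b.

From HB Require Import structures.
From mathcomp Require Import all_boot all_order all_algebra.
From mathcomp Require Import boolp reals.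
From mathcomp Require Import sequences exp.
From mathcomp Require Import ring lra.
Set Implicit Arguments.
Unset Strict Implicit.
Unset Printing Implicit Defensive.

Import Order.TTheory GRing.Theory Num.Theory.
Local Open Scope ring_scope.

(* At the QRE the log-odds are linear in the parameter: A(nu_star) theta_star =
   c(mu_star) and B(mu_star) theta_star = d(nu_star), so theta_star solves the
   population least-squares system exactly, and the rank condition gives the
   system matrix a left inverse.  Moving the distributions by t in sup-norm moves
   the matrix by O(t) and, ln being Lipschitz away from 0, the right-hand side by
   O(t); the left inverse then keeps every least-squares minimizer within O(t) of
   theta_star, so the squared Frobenius error is O(t^2).  Hoeffding's inequality
   for the 2(m+n) one-sided deviations of the empirical frequencies, with a union
   bound, makes t^2 = 8 ln(2(m+n)/delta) / N with probability at least 1 - delta. *)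

Section RealFacts.
Variable R : realType.

Lemma ler_sum_term (T : finType) (F : T -> R) x :
  (forall y, 0 <= F y) -> F x <= \sum_y F y.
Proof. by move=> F0; rewrite (bigD1 x) //= lerDl; apply: sumr_ge0. Qed.

Lemma finite_abs_bound (T : finType) (f : T -> R) :
  exists2 c, 0 <= c & forall x, `|f x| <= c.
Proof.
exists (\sum_x `|f x|); first exact: sumr_ge0.
by move=> x; apply: ler_sum_term.
Qed.

Lemma finite_pos_lower_bound (T : finType) (f : T -> R) :
  (forall x, 0 < f x) -> exists2 m, 0 < m & forall x, m <= f x.
Proof.
(* The [1 +] keeps the witness positive when [T] is empty. *)
move=> f0; have f_inv_gt0 x : 0 < (f x)^-1 by rewrite invr_gt0.
have S0 : 0 <= \sum_x (f x)^-1 by apply: sumr_ge0 => x _; apply: ltW.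
exists (1 + \sum_x (f x)^-1)^-1; first by rewrite invr_gt0 ltr_wpDr.
move=> x; rewrite -[f x]invrK lef_pV2 ?posrE ?invr_gt0 ?ltr_wpDr //.
have := @ler_sum_term _ (fun y => (f y)^-1) x.
by move/(_ (fun y => ltW (f_inv_gt0 y))); lra.
Qed.

Lemma sqr_le (x c : R) : `|x| <= c -> x ^+ 2 <= c ^+ 2.
Proof.
move=> h; rewrite -real_normK ?num_real //.
by apply: lerXn2r => //; rewrite nnegrE // (le_trans _ h).
Qed.

Lemma sqr_sum_le n (x : 'I_n -> R) : (\sum_i x i) ^+ 2 <= n%:R * \sum_i x i ^+ 2.
Proof.
rewrite expr2 mulr_suml.
apply: (@le_trans _ _ (\sum_i \sum_j ((x i ^+ 2 + x j ^+ 2) / 2))).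
  apply: ler_sum => i _; rewrite mulr_sumr; apply: ler_sum => j _.
  have := sqr_ge0 (x i - x j); rewrite sqrrB mulr2n.
  set u := x i ^+ 2; set v := x j ^+ 2; set w := x i * x j; lra.
under eq_bigr => i _ do rewrite -mulr_suml big_split /= sumr_const card_ord.
rewrite -mulr_suml big_split /= sumr_const card_ord sumrMnl.
set s := \sum_(i < n) _; rewrite mulr_natl; lra.
Qed.

Lemma abs_sum_mul_le n (u v : 'I_n -> R) a b :
  (forall i, `|u i| <= a) -> (forall i, `|v i| <= b) ->
  `|\sum_i u i * v i| <= n%:R * (a * b).
Proof.
move=> hu hv; apply: (le_trans (ler_norm_sum _ _ _)).
rewrite mulr_natl -[n in _ *+ n]card_ord -sumr_const.
by apply: ler_sum => i _; rewrite normrM ler_pM.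
Qed.

Lemma ln_subr_le_div (x y : R) : 0 < x -> 0 < y -> ln x - ln y <= (x - y) / y.
Proof.
move=> x0 y0; rewrite -ln_div ?posrE //.
have -> : x / y = 1 + (x - y) / y by rewrite mulrBl divff ?gt_eqF // addrC subrK.
apply: le_ln1Dx; rewrite mulrBl divff ?gt_eqF //.
by have := divr_gt0 x0 y0; lra.
Qed.

Lemma ln_dist_le (x y m : R) : 0 < m -> m <= x -> m <= y ->
  `|ln x - ln y| <= `|x - y| / m.
Proof.
move=> m0 mx my; have x0 := lt_le_trans m0 mx; have y0 := lt_le_trans m0 my.
have bound z : m <= z -> `|x - y| / z <= `|x - y| / m.
  by move=> mz; rewrite ler_wpM2l // lef_pV2 ?posrE // (lt_le_trans m0 mz).
have k1 : (x - y) / y <= `|x - y| / m.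
  by apply: le_trans (bound _ my); rewrite ler_pM2r ?invr_gt0 ?ler_norm.
have k2 : (y - x) / x <= `|x - y| / m.
  by apply: le_trans (bound _ mx); rewrite ler_pM2r ?invr_gt0 // distrC ler_norm.
have := ln_subr_le_div x0 y0; have := ln_subr_le_div y0 x0.
rewrite ler_norml; lra.
Qed.

Lemma ln_ratio_dist_le (x x' y y' m t : R) : 0 < m ->
  m <= x -> m <= x' -> m <= y -> m <= y' -> `|x' - x| <= t -> `|y' - y| <= t ->
  `|ln (x' / y') - ln (x / y)| <= 2 * (t / m).
Proof.
move=> m0 mx mx' my my' hx hy; have pos z : m <= z -> z \is Num.pos.
  by move=> mz; rewrite posrE (lt_le_trans m0 mz).
rewrite !ln_div ?pos //.
have -> : ln x' - ln y' - (ln x - ln y) = (ln x' - ln x) - (ln y' - ln y) by ring.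
apply: (le_trans (ler_normB _ _)).
have := ln_dist_le m0 mx' mx; have := ln_dist_le m0 my' my.
have : `|x' - x| / m <= t / m by rewrite ler_pM2r ?invr_gt0.
have : `|y' - y| / m <= t / m by rewrite ler_pM2r ?invr_gt0.
lra.
Qed.

Lemma expR_le_quad (y : R) : `|y| <= 1 / 2 -> expR y <= 1 + y + 2 * y ^+ 2.
Proof.
rewrite ler_norml => /andP[y1 y2].
have yy : expR y * expR (- y) = 1 by rewrite -expRD subrr expR0.
have k1 : expR y * (1 - y) <= 1.
  rewrite -yy ler_wpM2l ?expR_ge0 //; have := expR_ge1Dx (- y); lra.
have k2 : 1 <= (1 + y + 2 * y ^+ 2) * (1 - y).
  have : 0 <= y ^+ 2 * (1 - 2 * y) by apply: mulr_ge0; [exact: sqr_ge0 | lra].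
  rewrite !expr2; nra.
by rewrite -(ler_pM2r (_ : 0 < 1 - y)); lra.
Qed.

Lemma sqnormB k (u v : 'cV[R]_k) : sqnorm (u - v) <= 2 * sqnorm u + 2 * sqnorm v.
Proof.
rewrite /sqnorm !mulr_sumr -big_split /=; apply: ler_sum => i _.
rewrite !mxE; have := sqr_ge0 (u i 0 + v i 0); rewrite sqrrD sqrrB mulr2n.
set a := u i 0 ^+ 2; set b := v i 0 ^+ 2; set c := u i 0 * v i 0; lra.
Qed.

Lemma sqnorm_le k (v : 'cV[R]_k) c : (forall i, `|v i 0| <= c) -> sqnorm v <= k%:R * c ^+ 2.
Proof.
move=> hv; rewrite mulr_natl -[k in _ *+ k]card_ord -sumr_const.
by apply: ler_sum => i _; apply: sqr_le.
Qed.

Lemma natr_card_set N (P : pred 'I_N) : #|[set k | P k]|%:R = \sum_k (P k)%:R :> R.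
Proof.
rewrite -sum1_card natr_sum big_mkcond /=; apply: eq_bigr => k _.
by rewrite inE; case: (P k).
Qed.

End RealFacts.

Definition l1norm (R : realType) n (v : 'cV[R]_n) : R := \sum_i `|v i 0|.

Section LeastSquaresStability.
Variables (R : realType) (k d : nat).
Implicit Types (G : 'M[R]_(k, d)) (v : 'cV[R]_d).

Lemma l1norm_ge0 n (v : 'cV[R]_n) : 0 <= l1norm v.
Proof. exact: sumr_ge0. Qed.

Lemma sqr_l1norm_le n (v : 'cV[R]_n) : l1norm v ^+ 2 <= n%:R * sqnorm v.
Proof.
apply: le_trans (sqr_sum_le (fun i => `|v i 0|)) _.
apply: ler_wpM2l => //; apply: ler_sum => i _.
by rewrite real_normK ?num_real.
Qed.

Lemma l1norm_le_left_inverse G (L : 'M[R]_(d, k)) La v :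
  L *m G = 1%:M -> (forall j i, `|L j i| <= La) ->
  l1norm v <= d%:R * La * l1norm (G *m v).
Proof.
move=> LG hL; rewrite -mulrA /l1norm mulr_natl -[d in _ *+ d]card_ord -sumr_const.
apply: ler_sum => j _.
have -> : v j 0 = (L *m (G *m v)) j 0 by rewrite mulmxA LG mul1mx.
rewrite mxE mulr_sumr; apply: (le_trans (ler_norm_sum _ _ _)).
by apply: ler_sum => i _; rewrite normrM ler_wpM2r.
Qed.

Lemma l1norm_mulmx_dist G G' e v :
  (forall i j, `|G' i j - G i j| <= e) ->
  l1norm (G *m v) <= l1norm (G' *m v) + k%:R * e * l1norm v.
Proof.
move=> hG; rewrite -mulrA /l1norm mulr_natl -[k in _ *+ k]card_ord -sumr_const.
rewrite -big_split /=; apply: ler_sum => i _.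
have -> : G *m v = G' *m v - (G' - G) *m v by rewrite mulmxBl opprB addrC subrK.
rewrite [(G' *m v - _) i 0]mxE; apply: (le_trans (ler_normD _ _)).
rewrite lerD2l [(- ((G' - G) *m v)) i 0]mxE normrN mxE mulr_sumr.
apply: (le_trans (ler_norm_sum _ _ _)).
by apply: ler_sum => j _; rewrite normrM ler_wpM2r // !mxE.
Qed.

Lemma col_mx_dist m1 m2 n (A A' : 'M[R]_(m1, n)) (B B' : 'M[R]_(m2, n)) c :
  (forall i j, `|A' i j - A i j| <= c) -> (forall i j, `|B' i j - B i j| <= c) ->
  forall i j, `|col_mx A' B' i j - col_mx A B i j| <= c.
Proof.
move=> hA hB i j; rewrite -(splitK i); case: (split i) => l /=.
  by rewrite !col_mxEu.
by rewrite !col_mxEd.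
Qed.

Lemma residual_dist G G' (h h' : 'cV[R]_k) th a b c :
  G *m th = h -> (forall i j, `|G' i j - G i j| <= a) ->
  (forall i, `|h' i 0 - h i 0| <= b) -> (forall j, `|th j 0| <= c) ->
  forall i, `|(G' *m th - h') i 0| <= d%:R * (a * c) + b.
Proof.
move=> hG hGG hh hth i.
have -> : G' *m th - h' = (G' - G) *m th - (h' - h) by rewrite mulmxBl -hG opprB addrA subrK.
rewrite mxE; apply: (le_trans (ler_normD _ _)).
rewrite [(- (h' - h)) i 0]mxE normrN; apply: lerD; last by rewrite !mxE.
by rewrite mxE; apply: abs_sum_mul_le => [j|//]; rewrite !mxE.
Qed.

Lemma lsq_minimizer_l1_dist G G' (L : 'M[R]_(d, k)) (h' : 'cV[R]_k) th thh e La rho :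
  L *m G = 1%:M -> (forall j i, `|L j i| <= La) -> 0 <= La ->
  (forall i j, `|G' i j - G i j| <= e) -> e * (d%:R * La * k%:R) <= 1 / 2 ->
  (forall i, `|(G' *m th - h') i 0| <= rho) ->
  sqnorm (G' *m thh - h') <= sqnorm (G' *m th - h') ->
  l1norm (thh - th) ^+ 2 <= 16 * (d%:R * La) ^+ 2 * k%:R ^+ 2 * rho ^+ 2.
Proof.
move=> LG hL La0 hG he hres hmin; set v := thh - th; set D := d%:R * La.
have D0 : 0 <= D by rewrite mulr_ge0.
have hGv : l1norm (G' *m v) ^+ 2 <= 4 * k%:R ^+ 2 * rho ^+ 2.
  apply: le_trans (sqr_l1norm_le _) _.
  have -> : G' *m v = (G' *m thh - h') - (G' *m th - h').
    by rewrite mulmxBr opprB addrA subrK.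
  have := sqnormB (G' *m thh - h') (G' *m th - h'); have := sqnorm_le hres.
  have k0 : 0 <= k%:R :> R by [].
  nra.
(* A left inverse bounds [v] by [G v], and [G' v] differs from [G v] by a
   fraction at most 1/2 of [v], which can be absorbed. *)
have hv : l1norm v <= 2 * D * l1norm (G' *m v).
  have := l1norm_le_left_inverse v LG hL; have := l1norm_mulmx_dist v hG.
  have := l1norm_ge0 v; have := l1norm_ge0 (G' *m v); rewrite -/D.
  set S := l1norm v; set A := l1norm (G *m v); set A' := l1norm (G' *m v).
  move=> A'0 S0 hA hS.
  have : D * A <= D * A' + e * (D * k%:R) * S.
    by apply: le_trans (ler_wpM2l D0 hA) _; rewrite mulrDr; lra.
  have : 0 <= (1 / 2 - e * (D * k%:R)) * S by rewrite mulr_ge0 // subr_ge0.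
  lra.
apply: le_trans (sqr_le (c := 2 * D * l1norm (G' *m v)) _) _.
  by rewrite ger0_norm ?l1norm_ge0.
have := ler_wpM2l (sqr_ge0 D) hGv; nra.
Qed.

End LeastSquaresStability.

Section Softmax.
Variables (R : realType) (T : finType) (f w : T -> R).
Hypothesis w_softmax : forall x, w x = expR (f x) / \sum_y expR (f y).

Lemma softmax_distr (x0 : T) : (forall x, 0 < w x) /\ \sum_x w x = 1.
Proof.
have Z0 : 0 < \sum_y expR (f y).
  by rewrite (bigD1 x0) //= ltr_pwDl ?expR_gt0 // sumr_ge0 // => y _; apply: expR_ge0.
split=> [x|]; first by rewrite w_softmax divr_gt0 ?expR_gt0.
by under eq_bigr do rewrite w_softmax; rewrite -mulr_suml divff // gt_eqF.
Qed.

Lemma ln_softmax_ratio x y : ln (w x / w y) = f x - f y.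
Proof.
rewrite !w_softmax; set Z := \sum_y expR (f y).
have Z0 : Z != 0.
  rewrite gt_eqF // (lt_le_trans (expR_gt0 (f x))) // /Z.
  by apply: ler_sum_term => z; apply: expR_ge0.
by rewrite invf_div mulrA divfK // -expRN -expRD expRK.
Qed.

End Softmax.

Section Model.
Variables (R : realType) (p q d : nat) (phi : 'I_p.+1 -> 'I_q.+1 -> 'rV[R]_d).

Lemma Amat_mulmx nu th i : (Amat phi nu *m th) i 0 =
  \sum_b Qlin phi th (lift ord0 i) b * nu b - \sum_b Qlin phi th ord0 b * nu b.
Proof.
rewrite mxE -sumrB; under eq_bigr do rewrite mxE mulr_suml.
rewrite exchange_big; apply: eq_bigr => b _.
by rewrite /Qlin !mulr_suml -sumrB; apply: eq_bigr => j _; ring.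
Qed.

Lemma Bmat_mulmx mu th i : (Bmat phi mu *m th) i 0 =
  \sum_a Qlin phi th a (lift ord0 i) * mu a - \sum_a Qlin phi th a ord0 * mu a.
Proof.
rewrite mxE -sumrB; under eq_bigr do rewrite mxE mulr_suml.
rewrite exchange_big; apply: eq_bigr => a _.
by rewrite /Qlin !mulr_suml -sumrB; apply: eq_bigr => j _; ring.
Qed.

Lemma QRE_distr (eta : R) th mu nu : is_QRE eta (Qlin phi th) mu nu ->
  [/\ forall a, 0 < mu a, forall b, 0 < nu b, \sum_a mu a = 1 & \sum_b nu b = 1].
Proof.
by case=> /softmax_distr-/(_ ord0)[? ?] /softmax_distr-/(_ ord0)[? ?].
Qed.

Variable eta : R.
Hypothesis eta_gt0 : 0 < eta.

Local Notation LSmat nu mu := (col_mx (Amat phi nu) (Bmat phi mu)).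
Local Notation LSrhs mu nu := (col_mx (cvec eta mu) (dvec eta nu)).

Lemma QRE_Amat th mu nu : is_QRE eta (Qlin phi th) mu nu ->
  Amat phi nu *m th = cvec eta mu.
Proof.
case=> hmu _; apply/matrixP => i j; rewrite (ord1 j) Amat_mulmx mxE.
by rewrite (ln_softmax_ratio hmu) -mulrBr mulKf ?gt_eqF.
Qed.

Lemma QRE_Bmat th mu nu : is_QRE eta (Qlin phi th) mu nu ->
  Bmat phi mu *m th = dvec eta nu.
Proof.
case=> _ hnu; apply/matrixP => i j; rewrite (ord1 j) Bmat_mulmx mxE.
by rewrite (ln_softmax_ratio hnu); field; rewrite gt_eqF.
Qed.

Lemma cvec_dist (mu mu' : 'I_p.+1 -> R) m t : 0 < m -> (forall a, m <= mu a /\ m <= mu' a) ->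
  (forall a, `|mu' a - mu a| <= t) ->
  forall i, `|cvec eta mu' i 0 - cvec eta mu i 0| <= eta^-1 * (2 * (t / m)).
Proof.
move=> m0 hm ht i; rewrite !mxE -mulrBr normrM [`|eta^-1|]gtr0_norm ?invr_gt0 //.
apply: ler_wpM2l; first by rewrite invr_ge0 ltW.
by apply: ln_ratio_dist_le => //; first [exact: (hm _).1 | exact: (hm _).2 | exact: ht].
Qed.

Lemma dvec_dist (nu nu' : 'I_q.+1 -> R) m t : 0 < m -> (forall b, m <= nu b /\ m <= nu' b) ->
  (forall b, `|nu' b - nu b| <= t) ->
  forall i, `|dvec eta nu' i 0 - dvec eta nu i 0| <= eta^-1 * (2 * (t / m)).
Proof.
move=> m0 hm ht i; rewrite !mxE -mulrBr normrM normrN [`|eta^-1|]gtr0_norm ?invr_gt0 //.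
apply: ler_wpM2l; first by rewrite invr_ge0 ltW.
by apply: ln_ratio_dist_le => //; first [exact: (hm _).1 | exact: (hm _).2 | exact: ht].
Qed.

Section Perturbation.
Variable Phi : R.
Hypothesis phi_le : forall a b j, `|phi a b 0 j| <= Phi.

Lemma phi_dist_le a b a' b' j : `|phi a b 0 j - phi a' b' 0 j| <= 2 * Phi.
Proof.
by apply: le_trans (ler_normB _ _) _; have := phi_le a b j; have := phi_le a' b' j; lra.
Qed.

Lemma Amat_dist (nu nu' : 'I_q.+1 -> R) t : (forall b, `|nu' b - nu b| <= t) ->
  forall i j, `|Amat phi nu' i j - Amat phi nu i j| <= q.+1%:R * (t * (2 * Phi)).
Proof.
move=> ht i j; rewrite !mxE -sumrB; under eq_bigr do rewrite -mulrBl.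
by apply: abs_sum_mul_le => // b; apply: phi_dist_le.
Qed.

Lemma Bmat_dist (mu mu' : 'I_p.+1 -> R) t : (forall a, `|mu' a - mu a| <= t) ->
  forall i j, `|Bmat phi mu' i j - Bmat phi mu i j| <= p.+1%:R * (t * (2 * Phi)).
Proof.
move=> ht i j; rewrite !mxE -sumrB; under eq_bigr do rewrite -mulrBl.
by apply: abs_sum_mul_le => // a; apply: phi_dist_le.
Qed.

Lemma frob2_Qlin_le th thh :
  frob2 (Qlin phi thh) (Qlin phi th) <= p.+1%:R * q.+1%:R * (Phi * l1norm (thh - th)) ^+ 2.
Proof.
rewrite -mulrA mulr_natl -[X in _ *+ X]card_ord -sumr_const; apply: ler_sum => a _.
rewrite mulr_natl -[X in _ *+ X]card_ord -sumr_const; apply: ler_sum => b _.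
apply: sqr_le; rewrite /Qlin -sumrB /l1norm mulr_sumr.
apply: (le_trans (ler_norm_sum _ _ _)); apply: ler_sum => j _.
by rewrite -mulrBr normrM !mxE ler_wpM2r.
Qed.

Hypothesis Phi_ge0 : 0 <= Phi.
Local Notation e0 := ((p.+1 + q.+1)%:R * (2 * Phi)).

Lemma LSmat_dist (mu mu' : 'I_p.+1 -> R) (nu nu' : 'I_q.+1 -> R) t : 0 <= t ->
  (forall a, `|mu' a - mu a| <= t) -> (forall b, `|nu' b - nu b| <= t) ->
  forall i j, `|LSmat nu' mu' i j - LSmat nu mu i j| <= t * e0.
Proof.
move=> t0 hmu hnu; have tPhi0 : 0 <= t * (2 * Phi) by rewrite mulr_ge0 ?mulr_ge0.
apply: col_mx_dist => i j.
  apply: le_trans (Amat_dist hnu i j) _.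
  by have := mulr_ge0 tPhi0 (ler0n R p.+1); rewrite natrD; lra.
apply: le_trans (Bmat_dist hmu i j) _.
by have := mulr_ge0 tPhi0 (ler0n R q.+1); rewrite natrD; lra.
Qed.

Lemma LS_frob2_le th mu nu mu' nu' (L : 'M[R]_(d, p + q)) La Th m t thh :
  is_QRE eta (Qlin phi th) mu nu -> (forall j, `|th j 0| <= Th) ->
  L *m LSmat nu mu = 1%:M -> (forall j i, `|L j i| <= La) -> 0 <= La ->
  0 < m -> (forall a, m <= mu a /\ m <= mu' a) -> (forall b, m <= nu b /\ m <= nu' b) ->
  0 <= t -> (forall a, `|mu' a - mu a| <= t) -> (forall b, `|nu' b - nu b| <= t) ->
  t * e0 * (d%:R * La * (p + q)%:R) <= 1 / 2 ->
  is_LS_minimizer phi eta mu' nu' thh ->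
  frob2 (Qlin phi thh) (Qlin phi th) <=
  p.+1%:R * q.+1%:R * (Phi ^+ 2 * (16 * (d%:R * La) ^+ 2 * (p + q)%:R ^+ 2 *
    (d%:R * e0 * Th + eta^-1 * (2 / m)) ^+ 2)) * t ^+ 2.
Proof.
move=> hQ hTh LG hL La0 m0 hm hn t0 hmu hnu hsmall hmin.
set r0 := d%:R * e0 * Th + eta^-1 * (2 / m).
have hG := LSmat_dist t0 hmu hnu.
have hrhs : forall i, `|LSrhs mu' nu' i 0 - LSrhs mu nu i 0| <= eta^-1 * (2 * (t / m)).
  move=> i; apply: col_mx_dist i 0 => i' j'; rewrite (ord1 j').
    exact: cvec_dist.
  exact: dvec_dist.
have hGth : LSmat nu mu *m th = LSrhs mu nu by rewrite mul_col_mx (QRE_Amat hQ) (QRE_Bmat hQ).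
have hres : forall i, `|(LSmat nu' mu' *m th - LSrhs mu' nu') i 0| <= t * r0.
  move=> i; apply: le_trans (residual_dist hGth hG hrhs hTh i) _.
  suff -> : t * r0 = d%:R * (t * e0 * Th) + eta^-1 * (2 * (t / m)) by [].
  by rewrite /r0; ring.
have hl1 := lsq_minimizer_l1_dist LG hL La0 hG hsmall hres (hmin th).
apply: le_trans (frob2_Qlin_le th thh) _.
have PQ0 : 0 <= p.+1%:R * q.+1%:R :> R by rewrite mulr_ge0.
by have := ler_wpM2l PQ0 (ler_wpM2l (sqr_ge0 Phi) hl1); rewrite !exprMn; lra.
Qed.

End Perturbation.

Lemma QRE_LS_stable th mu nu : is_QRE eta (Qlin phi th) mu nu ->
  \rank (LSmat nu mu) = d ->
  exists tau K : R, [/\ 0 < tau, 0 <= K & forall t mu' nu', 0 <= t <= tau ->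
    (forall a, `|mu' a - mu a| <= t) -> (forall b, `|nu' b - nu b| <= t) ->
    [/\ forall a, 0 < mu' a, forall b, 0 < nu' b &
        forall thh, is_LS_minimizer phi eta mu' nu' thh ->
          frob2 (Qlin phi thh) (Qlin phi th) <= K * t ^+ 2]].
Proof.
move=> hQ hrk; have [mu_gt0 nu_gt0 _ _] := QRE_distr hQ.
have /row_fullP[L LG] : row_full (LSmat nu mu) by rewrite -col_leq_rank hrk.
pose munu x := match x with inl a => mu a | inr b => nu b end.
have [|m m0 hm] := @finite_pos_lower_bound _ _ munu; first by case.
have [Phi Phi0 hPhi] :=
  finite_abs_bound (fun x : 'I_p.+1 * 'I_q.+1 * 'I_d => phi x.1.1 x.1.2 0 x.2).
have [La La0 hLa] := finite_abs_bound (fun x : 'I_d * 'I_(p + q) => L x.1 x.2).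
have [Th Th0 hTh] := finite_abs_bound (fun j => th j 0).
set X := (p.+1 + q.+1)%:R * (2 * Phi) * (d%:R * La * (p + q)%:R).
have X0 : 0 <= X by rewrite !mulr_ge0.
exists (Num.min (m / 2) (1 / (2 * (X + 1)))).
exists (p.+1%:R * q.+1%:R * (Phi ^+ 2 * (16 * (d%:R * La) ^+ 2 * (p + q)%:R ^+ 2 *
  (d%:R * ((p.+1 + q.+1)%:R * (2 * Phi)) * Th + eta^-1 * (2 / (m / 2))) ^+ 2))); split.
- by rewrite lt_min !divr_gt0 //; lra.
- by rewrite !(mulr_ge0, addr_ge0, invr_ge0, divr_ge0) // ltW.
move=> t mu' nu' /andP[t0]; rewrite le_min => /andP[tm tX] hmu hnu.
have m2 : 0 < m / 2 by rewrite divr_gt0.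
have above (x x' : R) : m <= x -> `|x' - x| <= t -> m / 2 <= x /\ m / 2 <= x'.
  by move=> mx; rewrite ler_norml; lra.
have hm' a : m / 2 <= mu a /\ m / 2 <= mu' a by apply: above (hm (inl a)) (hmu a).
have hn' b : m / 2 <= nu b /\ m / 2 <= nu' b by apply: above (hm (inr b)) (hnu b).
split=> [a | b | thh hmin]; first exact: lt_le_trans m2 (hm' a).2.
  exact: lt_le_trans m2 (hn' b).2.
apply: (LS_frob2_le (Phi := Phi)) hQ hTh LG _ La0 _ hm' hn' t0 hmu hnu _ hmin => //.
- by move=> a b j; apply: (hPhi (a, b, j)).
- by move=> j i; apply: (hLa (j, i)).
have X1 : 0 < 2 * (X + 1) by lra.
by move: tX; rewrite -mulrA -/X ler_pdivlMr // mul1r; nra.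
Qed.

End Model.

Lemma sum_ffun_prod (R : realType) (T : finType) N (F : T -> R) :
  \sum_(s : {ffun 'I_N -> T}) \prod_k F (s k) = (\sum_x F x) ^+ N.
Proof.
by rewrite -(bigA_distr_bigA (fun (k : 'I_N) (x : T) => F x)) /= prodr_const card_ord.
Qed.

Section Sampling.
Variables (R : realType) (p q : nat) (mu : 'I_p.+1 -> R) (nu : 'I_q.+1 -> R).
Hypotheses (mu_ge0 : forall a, 0 <= mu a) (nu_ge0 : forall b, 0 <= nu b).
Hypotheses (mu_sum1 : \sum_a mu a = 1) (nu_sum1 : \sum_b nu b = 1).

Local Notation W := ('I_p.+1 * 'I_q.+1)%type.
Local Notation w x := (mu x.1 * nu x.2).

Lemma weight_ge0 (x : W) : 0 <= w x.
Proof. exact: mulr_ge0. Qed.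

Lemma sum_weight : \sum_(x : W) w x = 1.
Proof.
rewrite -(pair_bigA _ (fun a b => mu a * nu b)) /=.
by under eq_bigr do rewrite -mulr_sumr nu_sum1 mulr1.
Qed.

Lemma sample_prob_ge0 N (s : {ffun 'I_N -> W}) : 0 <= sample_prob mu nu s.
Proof. by apply: prodr_ge0 => k _; apply: weight_ge0. Qed.

Lemma sum_sample_prob N : \sum_(s : {ffun 'I_N -> W}) sample_prob mu nu s = 1.
Proof. by rewrite /sample_prob (sum_ffun_prod N (fun x : W => w x)) sum_weight expr1n. Qed.

Lemma Prob_mkcond N (E : {ffun 'I_N -> W} -> Prop) :
  Prob mu nu E = \sum_s (if `[< E s >] then sample_prob mu nu s else 0).
Proof. exact: big_mkcond. Qed.

Lemma le_Prob N (E F : {ffun 'I_N -> W} -> Prop) :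
  (forall s, E s -> F s) -> Prob mu nu E <= Prob mu nu F.
Proof.
move=> EF; rewrite !Prob_mkcond; apply: ler_sum => s _.
case: (pselect (E s)) => Es; first by rewrite (asboolT Es) (asboolT (EF _ Es)).
by rewrite asboolF //; case: ifP => // _; apply: sample_prob_ge0.
Qed.

Lemma Prob_union_bound N (I : finType) (B : I -> {ffun 'I_N -> W} -> Prop)
  (E : {ffun 'I_N -> W} -> Prop) :
  (forall s, (forall i, ~ B i s) -> E s) -> 1 - \sum_i Prob mu nu (B i) <= Prob mu nu E.
Proof.
move=> HE; under eq_bigr do rewrite Prob_mkcond.
rewrite Prob_mkcond exchange_big /= -(sum_sample_prob N) -sumrB; apply: ler_sum => s _.
have cond_ge0 (P : Prop) : 0 <= (if `[< P >] then sample_prob mu nu s else 0).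
  by case: ifP => // _; apply: sample_prob_ge0.
case: (pselect (E s)) => Es.
  by rewrite asboolT // lerBlDr lerDl sumr_ge0.
have [i Bi] : exists i, B i s.
  by apply: contra_notP Es => nB; apply: HE => i Bi; apply: nB; exists i.
by rewrite asboolF // subr_le0 (bigD1 i) //= asboolT // lerDl sumr_ge0.
Qed.

Lemma Prob_sum_gt_le N (Y : W -> R) c l : 0 <= l ->
  Prob mu nu (fun s : {ffun 'I_N -> W} => c < \sum_k Y (s k))
    <= expR (- (l * c)) * (\sum_x w x * expR (l * Y x)) ^+ N.
Proof.
move=> l0; rewrite -sum_ffun_prod mulr_sumr Prob_mkcond; apply: ler_sum => s _.
have -> : expR (- (l * c)) * \prod_k (w (s k) * expR (l * Y (s k)))
    = sample_prob mu nu s * expR (l * (\sum_k Y (s k) - c)).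
  by rewrite big_split /= -expR_sum -mulr_sumr mulrBr expRD /sample_prob; ring.
case: (pselect (c < \sum_k Y (s k))) => hc; last first.
  by rewrite asboolF // mulr_ge0 ?sample_prob_ge0 ?expR_ge0.
rewrite asboolT // ler_peMr ?sample_prob_ge0 //.
by apply: le_trans (expR_ge1Dx _); rewrite lerDl mulr_ge0 // subr_ge0 ltW.
Qed.

Lemma mgf_le (Y : W -> R) l : (forall x, `|Y x| <= 1) -> \sum_x w x * Y x = 0 ->
  0 <= l <= 1 / 2 -> \sum_x w x * expR (l * Y x) <= expR (2 * l ^+ 2).
Proof.
move=> Y1 Y0 /andP[l0 l1].
apply: le_trans (_ : \sum_x (w x + l * (w x * Y x) + 2 * l ^+ 2 * w x) <= _).
  apply: ler_sum => x _.
  have -> : w x + l * (w x * Y x) + 2 * l ^+ 2 * w x = w x * (1 + l * Y x + 2 * l ^+ 2) by ring.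
  have hlY : `|l * Y x| <= l by rewrite normrM (ger0_norm l0) ler_piMr.
  apply: ler_wpM2l; first exact: weight_ge0.
  apply: le_trans (expR_le_quad (le_trans hlY l1)) _.
  rewrite lerD2l ler_wpM2l // exprMn ler_piMr ?sqr_ge0 //.
  by rewrite -real_normK ?num_real // expr_le1.
rewrite !big_split /= -!mulr_sumr Y0 sum_weight mulr0 addr0 mulr1.
exact: expR_ge1Dx.
Qed.

Lemma hoeffding N (Y : W -> R) t : (forall x, `|Y x| <= 1) -> \sum_x w x * Y x = 0 ->
  0 <= t <= 2 ->
  Prob mu nu (fun s : {ffun 'I_N -> W} => N%:R * t < \sum_k Y (s k))
    <= expR (- (N%:R * t ^+ 2) / 8).
Proof.
(* Chernoff with [l = t / 4], the minimizer of [- l N t + 2 N l ^ 2]. *)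
move=> Y1 Y0 /andP[t0 t2]; have l0 : 0 <= t / 4 by rewrite divr_ge0.
apply: le_trans (Prob_sum_gt_le N Y (N%:R * t) l0) _.
apply: le_trans (ler_wpM2l (expR_ge0 _) (lerXn2r N _ _ (@mgf_le Y (t / 4) Y1 Y0 _))) _.
- by rewrite nnegrE sumr_ge0 // => x _; rewrite mulr_ge0 ?weight_ge0 ?expR_ge0.
- by rewrite nnegrE expR_ge0.
- by rewrite l0 /=; lra.
rewrite -expRM_natl -expRD.
suff -> : - (t / 4 * (N%:R * t)) + N%:R * (2 * (t / 4) ^+ 2) = - (N%:R * t ^+ 2) / 8 by [].
by field.
Qed.

Definition centered_indicator (i : 'I_p.+1 + 'I_q.+1) (x : W) : R :=
  match i with inl a => (x.1 == a)%:R - mu a | inr b => (x.2 == b)%:R - nu b end.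

Definition freq_err N (s : {ffun 'I_N -> W}) (i : 'I_p.+1 + 'I_q.+1) : R :=
  match i with inl a => muhat s a - mu a | inr b => nuhat s b - nu b end.

Lemma centered_indicator_le1 i x : `|centered_indicator i x| <= 1.
Proof.
have le1 (T : finType) (f : T -> R) y :
    (forall z, 0 <= f z) -> \sum_z f z = 1 -> 0 <= f y <= 1.
  by move=> f0 f1; rewrite f0 -f1 ler_sum_term.
case: i => [a|b] /=.
  by have := le1 _ _ a mu_ge0 mu_sum1; case: (x.1 == a) => /= /andP[]; rewrite ler_norml; lra.
by have := le1 _ _ b nu_ge0 nu_sum1; case: (x.2 == b) => /= /andP[]; rewrite ler_norml; lra.
Qed.

Lemma centered_indicator_mean i : \sum_(x : W) w x * centered_indicator i x = 0.
Proof.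
rewrite -(pair_bigA _ (fun a b => mu a * nu b * centered_indicator i (a, b))) /=.
case: i => [a|b] /=.
  under eq_bigr => a' _ do rewrite -mulr_suml -mulr_sumr nu_sum1 mulr1 mulrBr.
  rewrite sumrB -mulr_suml mu_sum1 mul1r (bigD1 a) //= eqxx mulr1 big1 ?addr0 ?subrr //.
  by move=> a' /negbTE ->; rewrite mulr0.
rewrite exchange_big /=.
under eq_bigr => b' _ do rewrite -mulr_suml -mulr_suml mu_sum1 mul1r mulrBr.
rewrite sumrB -mulr_suml nu_sum1 mul1r (bigD1 b) //= eqxx mulr1 big1 ?addr0 ?subrr //.
by move=> b' /negbTE ->; rewrite mulr0.
Qed.

Lemma sum_centered_indicator N (s : {ffun 'I_N -> W}) i : (0 < N)%N ->
  \sum_k centered_indicator i (s k) = N%:R * freq_err s i.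
Proof.
move=> N0; have N0' : N%:R != 0 :> R by rewrite pnatr_eq0 -lt0n.
by case: i => [a|b]; rewrite /= sumrB sumr_const card_ord /muhat /nuhat natr_card_set; field.
Qed.

Lemma Prob_freq_err_le N t : (0 < N)%N -> 0 <= t <= 2 ->
  1 - (2 * (p.+1 + q.+1))%:R * expR (- (N%:R * t ^+ 2) / 8) <=
  Prob mu nu (fun s : {ffun 'I_N -> W} =>
    (forall a, `|muhat s a - mu a| <= t) /\ (forall b, `|nuhat s b - nu b| <= t)).
Proof.
move=> N0 ht; pose sgn (b : bool) : R := if b then 1 else -1.
pose B (i : ('I_p.+1 + 'I_q.+1) * bool) (s : {ffun 'I_N -> W}) :=
  N%:R * t < \sum_k sgn i.2 * centered_indicator i.1 (s k).
apply: le_trans _ (@Prob_union_bound N _ B _ _); last first.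
  move=> s hs; suff err_le i : `|freq_err s i| <= t.
    by split=> [a|b]; [apply: (err_le (inl a)) | apply: (err_le (inr b))].
  have /negP := hs (i, true); have /negP := hs (i, false).
  rewrite /B /= -!mulr_sumr !sum_centered_indicator // mul1r mulN1r -!leNgt.
  by rewrite -mulrN !ler_pM2l ?ltr0n // ler_norml; lra.
suff : \sum_i Prob mu nu (B i) <= (2 * (p.+1 + q.+1))%:R * expR (- (N%:R * t ^+ 2) / 8).
  by lra.
apply: le_trans (_ : \sum_(i : ('I_p.+1 + 'I_q.+1) * bool)
  expR (- (N%:R * t ^+ 2) / 8) <= _); last first.
  by rewrite sumr_const card_prod card_sum !card_ord card_bool [X in _ <= X]mulr_natl mulnC.
apply: ler_sum => -[i b] _; rewrite /B /=.
apply: (@hoeffding N (fun x => sgn b * centered_indicator i x) t).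
- move=> x; rewrite normrM mulrC -[1]mulr1 ler_pM ?centered_indicator_le1 //.
  by case: b; rewrite /sgn ?normrN normr1.
- by under eq_bigr do rewrite mulrCA; rewrite -mulr_sumr centered_indicator_mean mulr0.
- exact: ht.
Qed.

End Sampling.

Section Rates.
Variable R : realType.

Lemma sqrt_div_le_eventually (c tau : R) : 0 < tau ->
  exists N0 : nat, forall N, (N0 <= N)%N -> (0 < N)%N /\ Num.sqrt (c / N%:R) <= tau.
Proof.
move=> tau0; exists (Num.truncn (c / tau ^+ 2)).+1 => N hN.
have N0 : (0 < N)%N by apply: leq_trans hN.
split=> //; rewrite -(ger0_norm (ltW tau0)) -sqrtr_sqr; apply: ler_wsqrtr.
have hc : c / tau ^+ 2 < N%:R by apply: lt_le_trans (truncnS_gt _) _; rewrite ler_nat.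
by rewrite ler_pdivrMr ?ltr0n // mulrC -ler_pdivrMr ?exprn_gt0 // ltW.
Qed.

Lemma expR_hoeffding_radius (c delta : R) N : 0 < delta -> delta < c -> (0 < N)%N ->
  c * expR (- (N%:R * (8 * ln (c / delta) / N%:R)) / 8) = delta.
Proof.
move=> d0 dc N0; have c0 := lt_trans d0 dc.
rewrite (_ : - _ / 8 = - ln (c / delta)); last by field; rewrite pnatr_eq0 -lt0n.
by rewrite expRN lnK ?posrE ?divr_gt0 // invf_div mulrC divfK ?gt_eqF.
Qed.

Lemma rate_bound (K lK ld : R) (m n : nat) : 0 <= K -> 0 <= lK -> 0 <= ld ->
  K * (8 * (lK + ld)) <=
  (8 * K * (lK + 1) + 1) * ((m.+1 ^ 2)%:R + (n.+1 ^ 2)%:R + (m.+1 + n.+1)%:R * ld).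
Proof.
move=> K0 lK0 ld0; set X := (_ + _ + _ * ld).
have X_ge : 1 + ld <= X.
  have : 1 <= (m.+1 ^ 2)%:R :> R by rewrite ler1n expn_gt0.
  have : 1 <= (m.+1 + n.+1)%:R :> R by rewrite ler1n.
  have : 0 <= (n.+1 ^ 2)%:R :> R by [].
  rewrite /X; nra.
have : 0 <= 8 * K * (lK + 1) + 1 by rewrite addr_ge0 // !mulr_ge0 // addr_ge0.
have : 0 <= K * lK * ld by rewrite !mulr_ge0.
nra.
Qed.

End Rates.

Theorem mainTheorem3 (R : realType) (p q d : nat)
  (phi : 'I_p.+1 -> 'I_q.+1 -> 'rV[R]_d) (eta M : R) (theta_star : 'cV[R]_d)
  (mu_star : 'I_p.+1 -> R) (nu_star : 'I_q.+1 -> R) :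
  (1 <= p)%N -> (1 <= q)%N -> 0 < eta ->
  sqnorm theta_star <= M ->
  is_QRE eta (Qlin phi theta_star) mu_star nu_star ->
  \rank (col_mx (Amat phi nu_star) (Bmat phi mu_star)) = d ->
  exists C : R, 0 < C /\
    forall delta : R, 0 < delta < 1 ->
    exists N0 : nat, forall N : nat, (N0 <= N)%N ->
      1 - delta <=
      Prob mu_star nu_star
        (fun s : {ffun 'I_N -> 'I_p.+1 * 'I_q.+1} =>
           (forall a, 0 < muhat (R:=R) s a) /\ (forall b, 0 < nuhat (R:=R) s b) /\
           forall theta_hat : 'cV[R]_d,
             is_LS_minimizer phi eta (muhat (R:=R) s) (nuhat (R:=R) s) theta_hat ->
             frob2 (Qlin phi theta_hat) (Qlin phi theta_star) <=
             C * (((p.+1) ^ 2)%:R + ((q.+1) ^ 2)%:R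
                  + (p.+1 + q.+1)%:R * ln (delta^-1)) / N%:R).
Proof.
move=> _ _ eta_gt0 _ hQ hrk.
have [mu_gt0 nu_gt0 mu_sum1 nu_sum1] := QRE_distr hQ.
have mu_ge0 a : 0 <= mu_star a by apply: ltW.
have nu_ge0 b : 0 <= nu_star b by apply: ltW.
have [tau [K [tau_gt0 K_ge0 stable]]] := QRE_LS_stable eta_gt0 hQ hrk.
set Kc : R := (2 * (p.+1 + q.+1))%:R.
have lnKc_ge0 : 0 <= ln Kc by apply: ln_ge0; rewrite ler1n.
exists (8 * K * (ln Kc + 1) + 1); split=> [|delta /andP[d0 d1]].
  by rewrite ltr_pwDr // !mulr_ge0 // addr_ge0.
have d_Kc : delta < Kc by rewrite (lt_le_trans d1) // ler1n.
have L0 : 0 <= ln (Kc / delta) by apply: ln_ge0; rewrite ler_pdivlMr // mul1r ltW.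
have min_gt0 : 0 < Num.min tau 2 by rewrite lt_min tau_gt0 ltr0n.
have [N0 hN0] := sqrt_div_le_eventually (8 * ln (Kc / delta)) min_gt0.
exists N0 => N /hN0[N_gt0]; set t := Num.sqrt _; rewrite le_min => /andP[t_tau t2].
have t0 : 0 <= t := sqrtr_ge0 _.
have tt : t ^+ 2 = 8 * ln (Kc / delta) / N%:R by rewrite sqr_sqrtr // divr_ge0 ?mulr_ge0.
have ht2 : 0 <= t <= 2 by rewrite t0.
have := Prob_freq_err_le mu_ge0 nu_ge0 mu_sum1 nu_sum1 N_gt0 ht2.
rewrite -/Kc tt expR_hoeffding_radius // => /le_trans; apply.
apply: (le_Prob mu_ge0 nu_ge0) => s [hmu hnu].
have tt_tau : 0 <= t <= tau by rewrite t0.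
have [muhat_gt0 nuhat_gt0 frob2_le] := stable t (muhat s) (nuhat s) tt_tau hmu hnu.
split=> //; split=> // thh /frob2_le /le_trans; apply.
rewrite tt mulrA ler_pM2r ?invr_gt0 ?ltr0n // lnM ?posrE ?invr_gt0 ?(lt_trans d0 d_Kc) //.
by apply: rate_bound => //; apply: ln_ge0; rewrite invf_ge1 // ltW.
Qed.
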